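(* Let $\beta\in(0,1)$, $z>0$, $c>0$, $\delta\in(0,1)$, and let $N$ and $\Delta$ be positive integers. Let $F$ be a continuous cumulative distribution function with support $[\underline{w},\overline{w}]$, $\underline{w}<\overline{w}$, and mean $\mu_w$, and assume $\underline{w}<(1-\beta)z+\beta\mu_w$ and $z+c<\overline{w}$. Put $\Upsilon(x)=\int_{\underline{w}}^{x}x\,dF(w)+\int_{x}^{\overline{w}}w\,dF(w)$. Let $w_R(0)$ be the unique solution in $[\underline{w},\overline{w}]$ of $x=z(1-\beta)+\beta\Upsilon(x)$ and $w_R(n)=(z+c)(1-\beta)+\beta\Upsilon(w_R(n-1))$ for $n\ge1$. Let $w_R^\delta(0)$ be the unique solution in $[\underline{w},\overline{w}]$ of $x=z(1-\beta)+\beta\delta\Upsilon(w_R(\Delta))+\beta(1-\delta)\Upsilon(x)$, and for $n=1,\dots,N$ let $w_R^{\delta}(n)=(z+c)(1-\beta)+\beta\delta\Upsilon(w_R(n-1+\Delta))+\beta(1-\delta)\Upsilon(w_R^\delta(n-1))$. Then $w_R(n+\Delta)>w_R^\delta(n)$ for all $n\in\{0,\dots,N\}$.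
   Context: Interpretation: $w_R(n)$ are reservation wages of a risk-neutral job searcher with $n$ remaining periods of unemployment benefits and no possibility of extension; $w_R^\delta(n)$ are reservation wages when benefits may (once) be extended by $\Delta$ periods with probability $\delta$ between offers. The lemma says that right after an extension the worker is more selective than just before it. *)

From HB Require Import structures.
From mathcomp Require Import all_boot all_order all_algebra.
From mathcomp Require Import all_classical all_reals all_analysis.
Set Implicit Arguments. Unset Strict Implicit. Unset Printing Implicit Defensive.
Import Order.TTheory GRing.Theory Num.Theory.
Import numFieldTopology.Exports.
Local Open Scope classical_set_scope.
Local Open Scope ring_scope.

Definition cdf_support (R : realType) (F : R -> R) (wl wu : R) : Prop :=
  [/\ (forall x, x <= wl -> F x = 0),
      (forall x, wu <= x -> F x = 1) &
      (forall a b, wl <= a -> a < b -> b <= wu -> F a < F b)].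

Definition mean_dF (R : realType) (F : cumulative R R) (wl wu : R) : R :=
  fine (\int[lebesgue_stieltjes_measure F]_(w in `[wl, wu]) (w%:E))%E.

Definition Upsilon (R : realType) (F : cumulative R R) (wl wu x : R) : R :=
  fine (\int[lebesgue_stieltjes_measure F]_(w in `[wl, x]) (x%:E)
        + \int[lebesgue_stieltjes_measure F]_(w in `[x, wu]) (w%:E))%E.

(* Since F is continuous and carries all its mass on [wl, wu], Upsilon x is
   the dF-integral of max(x, w) over [wl, wu]. Hence Upsilon is nondecreasing
   and 1-Lipschitz, and Upsilon a < Upsilon b whenever a < b and wl < b: with
   a' = max(a, wl), the integrand gains at least (b - a')/2 on (wl, m],
   m = min((a' + b)/2, wu), which has mass F m > 0.
   The increments of w_R start at c(1-beta) and are then contracted by the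
   factor beta, so they stay in [0, c(1-beta)] and w_R(n) > wl for n >= 1.
   If w_R^delta(0) >= w_R(Delta), subtracting the equations of w_R^delta(0)
   and w_R(Delta) and using these bounds gives
   w_R^delta(0) - w_R(Delta) <= -(1-beta)c(1-beta) + (w_R^delta(0) - w_R(Delta)),
   which is absurd. Finally
   w_R(n+1+Delta) - w_R^delta(n+1)
     = beta(1-delta)(Upsilon(w_R(n+Delta)) - Upsilon(w_R^delta(n))),
   which is positive by the strict monotonicity of Upsilon. *)

From HB Require Import structures.
From mathcomp Require Import all_boot all_order all_algebra.
From mathcomp Require Import all_classical all_reals all_analysis.
From mathcomp Require Import measurable_realfun ring lra.
Import Order.TTheory GRing.Theory Num.Theory.
Import numFieldTopology.Exports.
Local Open Scope ring_scope.
Local Open Scope classical_set_scope.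

Section integral_null_set.
Context d (T : measurableType d) (R : realType) (mu : {measure set T -> \bar R}).

Lemma integral_setU_null (A N : set T) (f : T -> \bar R) :
  measurable A -> measurable N -> measurable_fun (A `|` N) f -> mu N = 0%E ->
  (\int[mu]_(x in A `|` N) f x = \int[mu]_(x in A) f x)%E.
Proof.
move=> mA mN mf N0.
have mNA : measurable (N `\` A) by exact: measurableD.
have NA0 : mu (N `\` A) = 0%E.
  by apply/eqP; rewrite eq_le measure_ge0 andbT -N0 le_measure ?inE.
have ANA : A `|` N = A `|` (N `\` A) by rewrite setUDr setDv setD0.
rewrite ANA integral_setU //; first last.
- by rewrite /disj_set setDIK.
- by rewrite -ANA.
rewrite [X in (_ + X)%E]null_set_integral ?adde0 //.
by apply: measurable_funS mf => [|x [? _]]; [exact: measurableU | right].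
Qed.

End integral_null_set.

Section lebesgue_stieltjes_null_sets.
Context {R : realType} (F : cumulative R R).
Local Notation mu := (lebesgue_stieltjes_measure F).

Lemma lebesgue_stieltjes_measure_itv_oc (a b : R) :
  a <= b -> mu `]a, b] = (F b - F a)%:E.
Proof.
move=> ab; rewrite /lebesgue_stieltjes_measure /measure_extension /=.
by rewrite measurable_mu_extE /= ?wlength_itv_bnd //; exact: is_ocitv.
Qed.

Lemma lebesgue_stieltjes_measure_flat (S : set R) (a b : R) :
  measurable S -> a <= b -> S `<=` `]a, b] -> F a = F b -> mu S = 0%E.
Proof.
move=> mS ab Sab Fab; apply/eqP; rewrite eq_le measure_ge0 andbT.
apply: (@le_trans _ _ (mu `]a, b])); first by rewrite le_measure ?inE.
by rewrite lebesgue_stieltjes_measure_itv_oc // Fab subrr.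
Qed.

Lemma lebesgue_stieltjes_measure_set1 (x : R) :
  {for x, continuous F} -> mu [set x] = 0%E.
Proof.
move=> cFx; apply/eqP; rewrite eq_le measure_ge0 andbT.
apply/lee_addgt0Pr => e e0; rewrite add0e.
have /cvgrPdist_lt /(_ e e0) /nbhs_ballP [r /= r0 near_x] := cFx.
have r2_gt0 : 0 < r / 2 by rewrite divr_gt0.
apply: (@le_trans _ _ (mu `]x - r / 2, x])).
  apply: le_measure; rewrite ?inE // => y /= ->.
  by rewrite in_itv /= lexx andbT ltrBlDr ltrDl.
have near : `|F x - F (x - r / 2)| < e.
  apply: near_x; rewrite /ball /= opprB addrC subrK gtr0_norm //.
  by rewrite ltr_pdivrMr // ltr_pMr // ltr1n.
rewrite lebesgue_stieltjes_measure_itv_oc; last by rewrite gerBl ltW.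
by rewrite lee_fin; exact: le_trans (ler_norm _) (ltW near).
Qed.

End lebesgue_stieltjes_null_sets.

Section cdf_support_integrals.
Context {R : realType} (F : cumulative R R) (wl wu : R).
Hypotheses (cF : continuous F) (hs : cdf_support F wl wu).
Local Notation mu := (lebesgue_stieltjes_measure F).

Let F_left x : x <= wl -> F x = 0. Proof. by case: hs => + _ _; apply. Qed.
Let F_right x : wu <= x -> F x = 1. Proof. by case: hs => _ + _; apply. Qed.

Lemma cdf_support_lt : wl < wu.
Proof.
rewrite ltNge; apply/negP => uwl.
by have := @F_left wu uwl; rewrite F_right // => /eqP; rewrite oner_eq0.
Qed.

Lemma integral_itv_split_support (f : R -> \bar R) (x : R) :
  measurable_fun setT f ->
  (\int[mu]_(w in `[wl, x]) f w + \int[mu]_(w in `[x, wu]) f w =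
   \int[mu]_(w in `[wl, wu]) f w)%E.
Proof.
move=> mf.
have mfD D : measurable_fun D f by exact: measurable_funS mf.
have wlu := cdf_support_lt.
have [xwl|wlx] := ltP x wl.
  rewrite set_itv_ge ?bnd_simp -?ltNge // integral_set0 add0e.
  rewrite (@itv_bndbnd_setU _ _ _ (BLeft wl)) ?bnd_simp ?ltW // setUC.
  rewrite integral_setU_null //; first exact: mfD.
  apply: (@lebesgue_stieltjes_measure_flat _ _ _ (x - 1) wl) => //.
  - lra.
  - by move=> w /=; rewrite !in_itv /= => /andP[xw wwl]; apply/andP; split; lra.
  - by rewrite !F_left //; lra.
have [xwu|wux] := leP x wu.
  rewrite (@itv_bndbnd_setU _ _ (BLeft wl) (BLeft x) (BRight wu)) ?bnd_simp //.
  rewrite integral_setU //; last 2 first.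
  - exact: mfD.
  - apply: lt_disjoint => u v; rewrite !in_itv /= => /andP[_ ux] /andP[xv _].
    exact: lt_le_trans ux xv.
  congr (_ + _)%E; rewrite -(@setUitv1 _ _ _ _ true) ?bnd_simp //.
  rewrite integral_setU_null //; first exact: mfD.
  exact: lebesgue_stieltjes_measure_set1 (cF x).
rewrite (@set_itv_ge _ _ (BLeft x)) ?bnd_simp -?ltNge // integral_set0 adde0.
rewrite (@itv_bndbnd_setU _ _ (BLeft wl) (BRight wu) (BRight x)) ?bnd_simp ?ltW //.
rewrite integral_setU_null //; first exact: mfD.
apply: (@lebesgue_stieltjes_measure_flat _ _ _ wu x) => //.
- exact: ltW.
- by rewrite !F_right // ltW.
Qed.

Lemma lebesgue_stieltjes_support_le1 : (mu `[wl, wu] <= 1)%E.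
Proof.
have wlu := cdf_support_lt.
apply: (@le_trans _ _ (mu `]wl - 1, wu])).
  apply: le_measure; rewrite ?inE // => w /=.
  by rewrite !in_itv /= => /andP[lw ->]; rewrite andbT; lra.
rewrite lebesgue_stieltjes_measure_itv_oc; last lra.
by rewrite F_right // F_left ?subr0 //; lra.
Qed.

Lemma integrable_max_support (x : R) :
  mu.-integrable `[wl, wu] (EFin \o (fun w => Num.max x w)).
Proof.
apply: measurable_bounded_integrable => //.
- exact: le_lt_trans lebesgue_stieltjes_support_le1 (ltry _).
- exact: measurable_maxr.
exists (`|x| + `|wl| + `|wu|); split; first exact: num_real.
move=> M /ltW leM w /=; rewrite in_itv /= => /andP[lw wu']; apply: le_trans leM.
have norm_bounds (r : R) : - `|r| <= r <= `|r| by rewrite -ler_norml lexx.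
move: (norm_bounds x) (norm_bounds wl) (norm_bounds wu).
move=> /andP[? ?] /andP[? ?] /andP[? ?].
by rewrite ler_norml; case: (leP x w) => _; apply/andP; split; lra.
Qed.

Lemma Upsilon_integral (x : R) :
  (Upsilon F wl wu x)%:E = (\int[mu]_(w in `[wl, wu]) (Num.max x w)%:E)%E.
Proof.
rewrite /Upsilon.
have -> : (\int[mu]_(w in `[wl, x]) x%:E =
           \int[mu]_(w in `[wl, x]) (Num.max x w)%:E)%E.
  by apply: eq_integral => w; rewrite inE /= in_itv /= => /andP[_ wx]; rewrite max_l.
have -> : (\int[mu]_(w in `[x, wu]) w%:E =
           \int[mu]_(w in `[x, wu]) (Num.max x w)%:E)%E.
  by apply: eq_integral => w; rewrite inE /= in_itv /= => /andP[xw _]; rewrite max_r.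
rewrite integral_itv_split_support ?fineK //.
  exact: integrable_fin_num (integrable_max_support x).
by apply/measurable_EFinP; apply: measurable_maxr.
Qed.

Lemma Upsilon_sub (a b : R) :
  (Upsilon F wl wu b - Upsilon F wl wu a)%:E =
  (\int[mu]_(w in `[wl, wu]) (Num.max b w - Num.max a w)%:E)%E.
Proof.
by rewrite EFinB !Upsilon_integral integralB_EFin //; exact: integrable_max_support.
Qed.

Let measurable_max_sub (a b : R) (D : set R) :
  measurable_fun D (fun w => (Num.max b w - Num.max a w)%:E).
Proof.
by apply/measurable_EFinP; apply: measurable_funB; exact: measurable_maxr.
Qed.

Let max_sub_ge0 (a b w : R) : a <= b -> 0 <= Num.max b w - Num.max a w.
Proof. by move=> ab; case: (leP a w); case: (leP b w); lra. Qed.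

Lemma Upsilon_sub_bounds (a b : R) : a <= b ->
  0 <= Upsilon F wl wu b - Upsilon F wl wu a <= b - a.
Proof.
move=> ab.
have max_sub_le w : Num.max b w - Num.max a w <= b - a.
  by case: (leP a w); case: (leP b w); lra.
apply/andP; split; rewrite -lee_fin Upsilon_sub.
  by apply: integral_ge0 => w _; rewrite lee_fin max_sub_ge0.
apply: (@le_trans _ _ (\int[mu]_(w in `[wl, wu]) (cst (b - a)%:E) w)%E).
  apply: ge0_le_integral => //.
  - by move=> w _; rewrite lee_fin max_sub_ge0.
  - exact: measurable_max_sub.
  - by move=> w _; rewrite lee_fin.
rewrite integral_cst // -[leRHS]mule1 lee_wpmul2l ?lebesgue_stieltjes_support_le1 //.
by rewrite lee_fin subr_ge0.
Qed.

Lemma Upsilon_lt (a b : R) : a < b -> wl < b ->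
  Upsilon F wl wu a < Upsilon F wl wu b.
Proof.
move=> ab wlb; have wlu := cdf_support_lt.
set a' := Num.max a wl; set m := Num.min ((a' + b) / 2) wu.
set e := (b - a') / 2.
have [aa' wla' a'b] : [/\ a <= a', wl <= a' & a' < b].
  by rewrite /a'; case: (leP a wl); split; lra.
have [wlm mwu mb] : [/\ wl < m, m <= wu & m <= (a' + b) / 2].
  by rewrite /m; case: (leP ((a' + b) / 2) wu); split; lra.
have e_gt0 : 0 < e by rewrite /e; lra.
have gap w : w <= m -> e <= Num.max b w - Num.max a w.
  by rewrite /e => wm; case: (leP a w); case: (leP b w); lra.
rewrite -subr_gt0 -lte_fin Upsilon_sub.
apply: (@lt_le_trans _ _ (e%:E * mu `]wl, m])%E).
  rewrite lebesgue_stieltjes_measure_itv_oc ?ltW // -EFinM lte_fin.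
  by rewrite mulr_gt0 // subr_gt0; case: hs => _ _; apply.
rewrite -integral_cst //.
apply: (@le_trans _ _
  (\int[mu]_(w in `]wl, m]) (Num.max b w - Num.max a w)%:E)%E).
  apply: ge0_le_integral => //.
  - by move=> w _; rewrite lee_fin ltW.
  - exact: measurable_max_sub.
  - by move=> w; rewrite /= in_itv /= => /andP[_ wm]; rewrite lee_fin gap.
apply: ge0_subset_integral => //.
- exact: measurable_max_sub.
- by move=> w _; rewrite lee_fin max_sub_ge0 // ltW.
- by move=> w /=; rewrite !in_itv /= => /andP[wlw wm]; rewrite ltW //=; lra.
Qed.

End cdf_support_integrals.

Section reservation_wages.
Context {R : realType} (U : R -> R) (wl beta z c delta : R).
Hypothesis U_sub_bounds : forall a b, a <= b -> 0 <= U b - U a <= b - a.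
Hypothesis U_lt : forall a b, a < b -> wl < b -> U a < U b.
Hypotheses (beta01 : 0 < beta < 1) (c_gt0 : 0 < c) (delta01 : 0 < delta < 1).
Variable wR : nat -> R.
Hypothesis wR0 : wR 0%N = z * (1 - beta) + beta * U (wR 0%N).
Hypothesis wRS : forall n, wR n.+1 = (z + c) * (1 - beta) + beta * U (wR n).
Hypothesis wl_wR0 : wl <= wR 0%N.

Let step_gt0 : 0 < c * (1 - beta).
Proof. by case/andP: beta01 => _ b1; rewrite mulr_gt0 // subr_gt0. Qed.

Lemma wR1_sub : wR 1%N - wR 0%N = c * (1 - beta).
Proof. by rewrite wRS {2}wR0; ring. Qed.

Lemma wR_incr_bounds n : 0 <= wR n.+1 - wR n <= c * (1 - beta).
Proof.
case/andP: beta01 => b0 b1.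
elim: n => [|n /andP[d_ge0 d_le]]; first by rewrite wR1_sub lexx ltW.
have -> : wR n.+2 - wR n.+1 = beta * (U (wR n.+1) - U (wR n)).
  by rewrite [wR n.+2]wRS [X in _ - X = _]wRS; ring.
have /andP[u0 u1] : 0 <= U (wR n.+1) - U (wR n) <= wR n.+1 - wR n.
  by apply: U_sub_bounds; rewrite -subr_ge0.
by apply/andP; split; nra.
Qed.

Lemma wl_lt_wR n : wl < wR n.+1.
Proof.
elim: n => [|n IH].
  by rewrite (le_lt_trans wl_wR0) // -subr_gt0 wR1_sub step_gt0.
by have /andP[+ _] := wR_incr_bounds n.+1; rewrite subr_ge0; exact: lt_le_trans.
Qed.

Lemma extended_wage0_lt (Delta : nat) (x : R) : (0 < Delta)%N ->
  x = z * (1 - beta) + beta * delta * U (wR Delta) + beta * (1 - delta) * U x ->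
  x < wR Delta.
Proof.
case: Delta => // d _ x_eq; rewrite ltNge; apply/negP => le_x.
case/andP: beta01 => b0 b1; case/andP: delta01 => d0 d1.
have /andP[Ux0 Ux] := U_sub_bounds _ _ le_x.
have /andP[incr0 incr] := wR_incr_bounds d.
have /andP[_ Ud] : 0 <= U (wR d.+1) - U (wR d) <= wR d.+1 - wR d.
  by apply: U_sub_bounds; rewrite -subr_ge0.
set k := c * (1 - beta); set p := beta * (1 - delta).
have diff : x - wR d.+1 =
    - k + beta * (U (wR d.+1) - U (wR d)) + p * (U x - U (wR d.+1)).
  by rewrite {1}x_eq (wRS d) /k /p; ring.
have le_beta_k : beta * (U (wR d.+1) - U (wR d)) <= beta * k.
  by rewrite ler_pM2l //; exact: le_trans Ud incr.
have le_diff : p * (U x - U (wR d.+1)) <= x - wR d.+1.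
  apply: le_trans Ux; rewrite ler_piMl //.
  by rewrite mulr_ile1 ?subr_ge0 ?ltW // ltrBlDl ltrDr.
have : beta * k < k by rewrite gtr_pMl // step_gt0.
lra.
Qed.

Lemma extended_wage_step (x y : R) : x < y -> wl < y ->
  (z + c) * (1 - beta) + beta * delta * U y + beta * (1 - delta) * U x <
  (z + c) * (1 - beta) + beta * U y.
Proof.
move=> xy wly; case/andP: beta01 => b0 _; case/andP: delta01 => _ d1.
have : 0 < beta * (1 - delta) * (U y - U x).
  by rewrite !mulr_gt0 ?subr_gt0 // U_lt.
lra.
Qed.

Theorem extended_wage_lt (N Delta : nat) (wRd : nat -> R) : (0 < Delta)%N ->
  wRd 0%N = z * (1 - beta) + beta * delta * U (wR Delta)
            + beta * (1 - delta) * U (wRd 0%N) ->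
  (forall n, (n < N)%N ->
     wRd n.+1 = (z + c) * (1 - beta) + beta * delta * U (wR (n + Delta)%N)
                + beta * (1 - delta) * U (wRd n)) ->
  forall n, (n <= N)%N -> wRd n < wR (n + Delta)%N.
Proof.
move=> Delta_gt0 wRd0 wRdS.
elim=> [_|n IH le_nN]; first exact: extended_wage0_lt.
rewrite wRdS // addSn wRS; apply: extended_wage_step; first exact: IH (ltnW le_nN).
by rewrite -(prednK Delta_gt0) addnS; exact: wl_lt_wR.
Qed.

End reservation_wages.

Theorem lemma5 (R : realType) (beta z c delta : R) (N Delta : nat)
  (F : cumulative R R) (wl wu : R) (wR wRd : nat -> R) :
  0 < beta < 1 -> 0 < z -> 0 < c -> 0 < delta < 1 ->
  (0 < N)%N -> (0 < Delta)%N ->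
  wl < wu ->
  continuous F ->
  cdf_support F wl wu ->
  wl < (1 - beta) * z + beta * mean_dF F wl wu ->
  z + c < wu ->
  (* w_R(0): the solution in [wl, wu] of x = z(1-beta) + beta Upsilon(x) *)
  wl <= wR 0%N <= wu ->
  wR 0%N = z * (1 - beta) + beta * Upsilon F wl wu (wR 0%N) ->
  (forall n : nat,
     wR n.+1 = (z + c) * (1 - beta) + beta * Upsilon F wl wu (wR n)) ->
  (* w_R^delta(0) *)
  wl <= wRd 0%N <= wu ->
  wRd 0%N = z * (1 - beta) + beta * delta * Upsilon F wl wu (wR Delta)
            + beta * (1 - delta) * Upsilon F wl wu (wRd 0%N) ->
  (forall n : nat, (n < N)%N ->
     wRd n.+1 = (z + c) * (1 - beta)
                + beta * delta * Upsilon F wl wu (wR (n + Delta)%N)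
                + beta * (1 - delta) * Upsilon F wl wu (wRd n)) ->
  forall n : nat, (n <= N)%N -> wRd n < wR (n + Delta)%N.
Proof.
(* The discarded hypotheses only serve to make w_R(0) and w_R^delta(0) exist. *)
move=> beta01 _ c_gt0 delta01 _ Delta_gt0 _ cF hs _ _ /andP[wl_wR0 _] wR0 wRS _.
apply: (@extended_wage_lt R (Upsilon F wl wu) wl) => //.
- exact: Upsilon_sub_bounds.
- exact: Upsilon_lt.
Qed.
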